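(* Let $(S_n)_{n\ge0}$ be defined by $S_0=3$, $S_1=1$, $S_2=3$ and $S_{n+1}=S_n+S_{n-1}+S_{n-2}$ for $n\ge 2$. Let $\alpha,\beta,\gamma$ be the roots of $x^3-x^2-x-1=0$ and $C_n=\alpha^n\beta^n+\alpha^n\gamma^n+\beta^n\gamma^n$ for $n\ge0$. Then for all $n\ge 0$, $$S_n^4=S_{4n}+2C_{2n}+4C_n^2+4S_{2n}C_n=S_{4n}-4S_n+4S_{2n}C_n+6C_n^2.$$
   Context: $S_n$ is the generalized Lucas (generalized Tribonacci) sequence. *)

From HB Require Import structures.
From mathcomp Require Import all_boot all_order all_algebra all_field.
Set Implicit Arguments. Unset Strict Implicit. Unset Printing Implicit Defensive.
Import Order.TTheory GRing.Theory Num.Theory.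
Local Open Scope ring_scope.

Fixpoint S (n : nat) : int :=
  match n with
  | 0%N => 3
  | 1%N => 1
  | 2%N => 3
  | ((m.+1 as q).+1 as p).+1 => S p + S q + S m
  end.

Definition C (a b c : algC) (n : nat) : algC :=
  a ^+ n * b ^+ n + a ^+ n * c ^+ n + b ^+ n * c ^+ n.

From HB Require Import structures.
From mathcomp Require Import all_boot all_order all_algebra all_field.
From mathcomp Require Import ring.
Import Order.TTheory GRing.Theory Num.Theory.
Set Implicit Arguments.
Unset Strict Implicit.
Unset Printing Implicit Defensive.
Local Open Scope ring_scope.

(* By Vieta, the roots satisfy a + b + c = 1, ab + ac + bc = -1 and abc = 1.
   Hence S n = a^n + b^n + c^n: both sides obey the Tribonacci recurrence and
   agree at n = 0, 1, 2.  Writing x, y, z for a^n, b^n, c^n, we get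
   C n = xy + xz + yz and C (2n) = x^2y^2 + x^2z^2 + y^2z^2, so the first
   equality is the expansion of (x + y + z)^4, and the second follows from
   x^2y^2 + x^2z^2 + y^2z^2 = (xy + xz + yz)^2 - 2xyz(x + y + z) with xyz = 1. *)

Definition tribonacci_rec {R : zmodType} (u : nat -> R) :=
  forall n, u n.+3 = u n.+2 + u n.+1 + u n.

Lemma tribonacci_rec_eq (R : zmodType) (u v : nat -> R) :
  tribonacci_rec u -> tribonacci_rec v ->
  u 0%N = v 0%N -> u 1%N = v 1%N -> u 2%N = v 2%N -> u =1 v.
Proof.
move=> ru rv u0 u1 u2; elim/ltn_ind=> -[|[|[|m]]] IH //.
by rewrite ru rv !IH //; apply/leqW/leqW.
Qed.

Lemma tribonacci_recD (R : zmodType) (u v : nat -> R) :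
  tribonacci_rec u -> tribonacci_rec v -> tribonacci_rec (fun n => u n + v n).
Proof. by move=> ru rv n; rewrite ru rv addrACA (addrACA (u n.+2)). Qed.

Lemma tribonacci_rec_expr (R : ringType) (t : R) :
  t ^+ 3 = t ^+ 2 + t + 1 -> tribonacci_rec (fun n => t ^+ n).
Proof.
by move=> t3 n; rewrite -addn3 exprD t3 !mulrDr mulr1 -exprSr -exprD addn2.
Qed.

Lemma S_rec n : S n.+3 = S n.+2 + S n.+1 + S n.
Proof. by []. Qed.

Lemma tribonacci_rec_S (R : ringType) : tribonacci_rec (fun n => (S n)%:~R : R).
Proof. by move=> n; rewrite S_rec !intrD. Qed.

Lemma prod_XsubC3 (R : comNzRingType) (a b c : R) :
  ('X - a%:P) * ('X - b%:P) * ('X - c%:P) =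
  'X^3 - (a + b + c)%:P * 'X^2 + (a * b + a * c + b * c)%:P * 'X - (a * b * c)%:P.
Proof. by rewrite !polyCD !polyCM; ring. Qed.

Lemma vieta3 (R : comNzRingType) (a b c s1 s2 s3 : R) :
  'X^3 - s1%:P * 'X^2 + s2%:P * 'X - s3%:P
    = ('X - a%:P) * ('X - b%:P) * ('X - c%:P) ->
  [/\ a + b + c = s1, a * b + a * c + b * c = s2 & a * b * c = s3].
Proof.
rewrite prod_XsubC3 => E.
have coef_eq i := congr1 (fun p : {poly R} => p`_i) E.
move: (coef_eq 0%N) (coef_eq 1%N) (coef_eq 2%N); rewrite /= !coefE /=.
rewrite !(mulr0, mulr1, subr0, sub0r, addr0, add0r, oppr0).
by move=> /eqP; rewrite eqr_opp => /eqP-> -> /eqP; rewrite eqr_opp => /eqP->.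
Qed.

Lemma power_sum3_expr4 (R : comRingType) (x y z : R) :
  (x + y + z) ^+ 4 = x ^+ 4 + y ^+ 4 + z ^+ 4
    + 2 * (x ^+ 2 * y ^+ 2 + x ^+ 2 * z ^+ 2 + y ^+ 2 * z ^+ 2)
    + 4 * (x * y + x * z + y * z) ^+ 2
    + 4 * (x ^+ 2 + y ^+ 2 + z ^+ 2) * (x * y + x * z + y * z).
Proof. by ring. Qed.

Lemma pair_products_sqr (R : comRingType) (x y z : R) :
  x ^+ 2 * y ^+ 2 + x ^+ 2 * z ^+ 2 + y ^+ 2 * z ^+ 2
    = (x * y + x * z + y * z) ^+ 2 - 2 * (x * y * z) * (x + y + z).
Proof. by ring. Qed.

Section TribonacciRoots.

Variables (R : comNzRingType) (a b c : R).
Hypothesis roots_abc :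
  ('X^3 - 'X^2 - 'X - 1 : {poly R}) = ('X - a%:P) * ('X - b%:P) * ('X - c%:P).

Lemma tribonacci_vieta :
  [/\ a + b + c = 1, a * b + a * c + b * c = -1 & a * b * c = 1].
Proof. by apply: vieta3; rewrite -roots_abc polyCN polyC1 mul1r mulN1r. Qed.

Lemma tribonacci_root t : t \in [:: a; b; c] -> t ^+ 3 = t ^+ 2 + t + 1.
Proof.
move=> t_root; have := congr1 (horner^~ t) roots_abc; rewrite !hornerE => root_t.
apply/eqP; rewrite -subr_eq0 !opprD !addrA root_t.
by move: t_root; rewrite !inE => /or3P[] /eqP->; rewrite subrr ?mulr0 ?mul0r.
Qed.

Lemma S_power_sum n : (S n)%:~R = a ^+ n + b ^+ n + c ^+ n.
Proof.
have [e1 e2 _] := tribonacci_vieta.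
have rec_root t : t \in [:: a; b; c] -> tribonacci_rec (fun n => t ^+ n).
  by move=> t_root; apply/tribonacci_rec_expr/tribonacci_root.
move: n; apply: (@tribonacci_rec_eq _ _ (fun n => a ^+ n + b ^+ n + c ^+ n)
  (tribonacci_rec_S R)).
- by do ![apply: tribonacci_recD | apply: rec_root; rewrite !inE eqxx ?orbT].
- by rewrite /= !expr0; ring.
- by rewrite !expr1 e1.
- have -> : a ^+ 2 + b ^+ 2 + c ^+ 2
            = (a + b + c) ^+ 2 - 2 * (a * b + a * c + b * c) by ring.
  by rewrite e1 e2; ring.
Qed.

End TribonacciRoots.

Theorem mainTheorem9 (alpha beta gamma : algC)
  (hroots : ('X^3 - 'X^2 - 'X - 1 : {poly algC})
            = ('X - alpha%:P) * ('X - beta%:P) * ('X - gamma%:P))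
  (n : nat) :
  ((S n)%:~R ^+ 4 = (S (4 * n))%:~R + 2 * C alpha beta gamma (2 * n)
                    + 4 * C alpha beta gamma n ^+ 2
                    + 4 * (S (2 * n))%:~R * C alpha beta gamma n)
  /\
  ((S (4 * n))%:~R + 2 * C alpha beta gamma (2 * n)
     + 4 * C alpha beta gamma n ^+ 2
     + 4 * (S (2 * n))%:~R * C alpha beta gamma n
   = (S (4 * n))%:~R - 4 * (S n)%:~R
     + 4 * (S (2 * n))%:~R * C alpha beta gamma n
     + 6 * C alpha beta gamma n ^+ 2 :> algC).
Proof.
have [_ _ e3] := tribonacci_vieta hroots.
have prod_n : alpha ^+ n * beta ^+ n * gamma ^+ n = 1 by rewrite -!exprMn e3 expr1n.
rewrite /C !(S_power_sum hroots) !(mulnC _ n) !exprM.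
split; first exact: power_sum3_expr4.
by rewrite pair_products_sqr prod_n; ring.
Qed.
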